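(* Let $M$ be a finitely generated right $R$-module. Then $M$ is injective if and only if $M$ is both weakly injective and quasi-pseudo principally injective.
   Context: All rings are associative with identity and all modules are unitary right $R$-modules; $E(M)$ denotes the injective hull of $M$. $M$ is weakly injective if for every finitely generated submodule $N$ of $E(M)$ there is a submodule $X$ of $E(M)$ with $N\subseteq X\cong M$. A submodule $A$ of $M$ is $M$-cyclic if $A\cong M/L$ for some submodule $L$ of $M$ (equivalently, $A$ is the image of an endomorphism of $M$). $M$ is quasi-pseudo principally injective if for every $M$-cyclic submodule $A$ of $M$, every $R$-monomorphism $A\to M$ extends to an $R$-endomorphism of $M$. *)

(* Right R-modules are modelled as left modules over the
   converse ring R^c, i.e. M : lmodType R^c, where  a *: m  stands for  m·a. *)
From HB Require Import structures.
From mathcomp Require Import all_boot all_order all_algebra.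
Set Implicit Arguments. Unset Strict Implicit. Unset Printing Implicit Defensive.
Import GRing.Theory.
Local Open Scope ring_scope.

Section ModuleDefs.
Variable R : nzRingType.
Local Notation rmod := (lmodType R^c).

Definition is_submodule (V : rmod) (S : {pred V}) : Prop := submod_closed S.

Definition hom_on (V W : rmod) (A : {pred V}) (f : V -> W) : Prop :=
  forall (a : R^c) (x y : V), x \in A -> y \in A -> f (a *: x + y) = a *: f x + f y.

Definition inj_on (V W : rmod) (A : {pred V}) (f : V -> W) : Prop :=
  forall x y : V, x \in A -> y \in A -> f x = f y -> x = y.

Definition fg_submodule (V : rmod) (A : {pred V}) : Prop :=
  exists s : seq V, all (fun v => v \in A) s /\
    forall x, x \in A -> exists c : 'I_(size s) -> R^c,
        x = \sum_(i < size s) c i *: s`_i.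

Definition fin_gen (M : rmod) : Prop := @fg_submodule M predT.

Definition injective_module (M : rmod) : Prop :=
  forall (N : rmod) (A : {pred N}) (f : N -> M),
    is_submodule A -> hom_on A f ->
    exists g : {linear N -> M}, forall x, x \in A -> g x = f x.

Definition injective_hull (M E : rmod) (iota : {linear M -> E}) : Prop :=
  [/\ injective_module E, injective iota &
      forall S : {pred E}, is_submodule S ->
        (forall x, x \in S -> (exists m, iota m = x) -> x = 0) ->
        forall x, x \in S -> x = 0].

Definition weakly_injective (M : rmod) : Prop :=
  exists (E : rmod) (iota : {linear M -> E}), injective_hull iota /\
    forall N : {pred E}, is_submodule N -> fg_submodule N ->
      exists X : {pred E}, [/\ is_submodule X,
        (forall x, x \in N -> x \in X) &
        exists h : {linear M -> E}, injective h /\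
          forall x, x \in X <-> exists m, h m = x].

Definition M_cyclic (M : rmod) (A : {pred M}) : Prop :=
  exists phi : {linear M -> M}, forall x, x \in A <-> exists m, phi m = x.

Definition qppi (M : rmod) : Prop :=
  forall (A : {pred M}) (f : M -> M),
    is_submodule A -> M_cyclic A -> hom_on A f -> inj_on A f ->
    exists g : {linear M -> M}, forall x, x \in A -> g x = f x.

End ModuleDefs.

From HB Require Import structures.
From mathcomp Require Import all_boot all_order all_algebra.
From mathcomp Require Import boolp.
Set Implicit Arguments. Unset Strict Implicit. Unset Printing Implicit Defensive.
Import GRing.Theory.
Local Open Scope ring_scope.

(* If M is injective, take E(M) = M.  Conversely, given e in E(M), weak
   injectivity yields X = h(M) containing both e and the image of M, for a
   monomorphism h.  Then iota = h o phi for a monomorphism phi of M, and by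
   quasi-pseudo principal injectivity the inverse of phi on phi(M) extends to
   g with g o phi = id.  The submodule h(ker g) meets iota(M) trivially, so
   ker g = 0 by essentiality; hence phi is onto, X = iota(M) and e lies in
   iota(M).  Thus M is isomorphic to the injective module E(M). *)

Section LinearOf.
Variables (R : nzRingType) (U V : lmodType R^c) (f : U -> V).
Hypothesis fP : forall (a : R^c) x y, f (a *: x + y) = a *: f x + f y.

Definition linear_of := f.
Fact linear_of_is_linear : linear linear_of. Proof. exact: fP. Qed.
HB.instance Definition _ :=
  GRing.isLinear.Build R^c U V *:%R linear_of linear_of_is_linear.

Lemma exists_linear : exists g : {linear U -> V}, g =1 f.
Proof. by exists linear_of. Qed.

End LinearOf.

Section Span.
Variables (R : nzRingType) (U : lmodType R^c).

Lemma submodule_sum (S : {pred U}) n (c : 'I_n -> R^c) (v : 'I_n -> U) :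
  is_submodule S -> (forall i, v i \in S) -> \sum_(i < n) c i *: v i \in S.
Proof.
move=> [S0 SL] Sv; apply: (big_ind (fun x => x \in S)) => // [x y Sx Sy|i _].
  by rewrite -[x]scale1r SL.
by rewrite -[_ *: _]addr0 SL.
Qed.

Definition span (t : seq U) : {pred U} :=
  [pred x | `[< exists c : 'I_(size t) -> R^c, x = \sum_(i < size t) c i *: t`_i >]].

Lemma spanP (t : seq U) x :
  reflect (exists c : 'I_(size t) -> R^c, x = \sum_(i < size t) c i *: t`_i)
          (x \in span t).
Proof. exact: asboolP. Qed.

Lemma span_submodule (t : seq U) : is_submodule (span t).
Proof.
split; first by apply/spanP; exists (fun=> 0); rewrite big1 // => i _; rewrite scale0r.
move=> a _ _ /spanP[cu ->] /spanP[cv ->]; apply/spanP.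
exists (fun i => a * cu i + cv i); rewrite scaler_sumr -big_split /=.
by apply: eq_bigr => i _; rewrite scalerDl scalerA.
Qed.

Lemma mem_span (t : seq U) j : (j < size t)%N -> t`_j \in span t.
Proof.
move=> lt_j; apply/spanP; exists (fun i => ((i : nat) == j)%:R).
rewrite (bigD1 (Ordinal lt_j)) //= eqxx scale1r big1 ?addr0 // => i.
by rewrite -val_eqE /= => /negbTE->; rewrite scale0r.
Qed.

Lemma span_fg (t : seq U) : fg_submodule (span t).
Proof.
exists t; split; last by move=> x /spanP.
by apply/(all_nthP 0) => j; apply: mem_span.
Qed.

End Span.

Section Images.
Variables (R : nzRingType) (U V : lmodType R^c).

Definition image_on (h : U -> V) (A : {pred U}) : {pred V} :=
  [pred x | `[< exists2 u, u \in A & h u = x >]].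

Lemma image_onP (h : U -> V) (A : {pred U}) x :
  reflect (exists2 u, u \in A & h u = x) (x \in image_on h A).
Proof. exact: asboolP. Qed.

Lemma image_on_submodule (h : {linear U -> V}) (A : {pred U}) :
  is_submodule A -> is_submodule (image_on h A).
Proof.
move=> [A0 AL]; split; first by apply/image_onP; exists 0; rewrite ?linear0.
move=> a _ _ /image_onP[u Au <-] /image_onP[v Av <-].
by apply/image_onP; exists (a *: u + v); rewrite ?AL ?linearP.
Qed.

Lemma kernel_submodule (g : {linear U -> V}) :
  is_submodule [pred u | g u == 0].
Proof.
split; first by rewrite inE linear0.
by move=> a u v; rewrite !inE linearP => /eqP-> /eqP->; rewrite scaler0 addr0.
Qed.

Lemma fg_submodule_containing (iota : {linear U -> V}) (e : V) :
  fin_gen U -> exists N : {pred V},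
    [/\ is_submodule N, fg_submodule N, e \in N & forall u, iota u \in N].
Proof.
move=> [s [_ s_gen]]; set t := e :: map iota s.
exists (span t); split; [exact: span_submodule | exact: span_fg | | ].
  exact: (mem_span (t := t) (j := 0) isT).
move=> u; have [c ->] := s_gen u isT; rewrite linear_sum.
under eq_bigr do rewrite linearZ.
apply: submodule_sum => [|i]; first exact: span_submodule.
rewrite -(nth_map 0 0 iota (ltn_ord i)).
by apply: (mem_span (t := t) (j := i.+1)); rewrite /= size_map ltnS.
Qed.

Lemma factor_through_mono (W : lmodType R^c)
    (h : {linear U -> V}) (k : {linear W -> V}) :
  injective h -> (forall w, exists u, h u = k w) ->
  exists phi : {linear W -> U}, forall w, h (phi w) = k w.
Proof.
move=> h_inj /choice[phi hphi].
have phiP a x y : phi (a *: x + y) = a *: phi x + phi y.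
  by apply: h_inj; rewrite linearP /= !hphi linearP.
by have [psi psiE] := exists_linear phiP; exists psi => w; rewrite psiE.
Qed.

End Images.

Lemma qppi_retraction (R : nzRingType) (M : lmodType R^c) (phi : {linear M -> M}) :
  qppi M -> injective phi -> exists g : {linear M -> M}, cancel phi g.
Proof.
move=> Mq phi_inj; set A := image_on phi predT.
have /choice[f fP] : forall x, exists y, x \in A -> phi y = x.
  by move=> x; case: (image_onP phi predT x) => [[m _ <-]|]; [exists m | exists 0].
have f_phi m : f (phi m) = m by apply: phi_inj; rewrite fP //; apply/image_onP; exists m.
have [g gE] : exists g : {linear M -> M}, forall x, x \in A -> g x = f x.
  apply: Mq; first exact: image_on_submodule.
  - by exists phi => x; split => [/image_onP[m _ <-]|[m <-]]; [|apply/image_onP]; exists m.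
  - by move=> a _ _ /image_onP[u _ <-] /image_onP[v _ <-]; rewrite -linearP !f_phi.
  - by move=> x y Ax Ay fxy; rewrite -(fP x Ax) -(fP y Ay) fxy.
by exists g => m; rewrite gE ?f_phi //; apply/image_onP; exists m.
Qed.

Section EssentialRetraction.
Variables (R : nzRingType) (M E : lmodType R^c) (iota h : {linear M -> E}).
Hypothesis iota_ess : forall S : {pred E}, is_submodule S ->
  (forall x, x \in S -> (exists m, iota m = x) -> x = 0) ->
  forall x, x \in S -> x = 0.
Hypothesis h_inj : injective h.

Lemma retraction_injective (phi g : {linear M -> M}) :
  (forall m, h (phi m) = iota m) -> cancel phi g -> injective g.
Proof.
move=> h_phi phiK.
suff ker0 k : g k = 0 -> k = 0.
  move=> x y gxy; apply/eqP; rewrite -subr_eq0; apply/eqP/ker0.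
  by rewrite linearB /= gxy subrr.
move=> gk0; apply: h_inj; rewrite linear0.
have S_sub := image_on_submodule h (kernel_submodule g).
apply: (iota_ess S_sub); last by apply/image_onP; exists k; rewrite ?inE ?gk0.
move=> _ /image_onP[k' /eqP gk'0 <-] [m hm].
have k'E : k' = phi m by apply: h_inj; rewrite h_phi.
have m0 : m = 0 by rewrite -[LHS]phiK -k'E.
by rewrite k'E m0 !linear0.
Qed.

Lemma hull_image_maximal : injective iota -> qppi M ->
  (forall m, exists m', h m' = iota m) -> forall m, exists m', iota m' = h m.
Proof.
move=> iota_inj Mq iota_sub_h m.
have [phi h_phi] := factor_through_mono h_inj iota_sub_h.
have phi_inj : injective phi by move=> x y /(congr1 h); rewrite !h_phi => /iota_inj.
have [g phiK] := qppi_retraction Mq phi_inj.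
have gK : cancel g phi := inj_can_sym phiK (retraction_injective h_phi phiK).
by exists (g m); rewrite -h_phi gK.
Qed.

End EssentialRetraction.

Lemma injective_qppi (R : nzRingType) (M : lmodType R^c) :
  injective_module M -> qppi M.
Proof. by move=> Minj A f Asub _ f_hom _; apply: Minj. Qed.

Lemma injective_weakly_injective (R : nzRingType) (M : lmodType R^c) :
  injective_module M -> weakly_injective M.
Proof.
move=> Minj; exists M, idfun; split.
  by split=> // S _ S_iota x Sx; apply: S_iota => //; exists x.
move=> N _ _; exists (predT : {pred M}); split=> //; exists idfun; split=> // x.
by split=> // _; exists x.
Qed.

Lemma injective_module_iso (R : nzRingType) (M E : lmodType R^c)
    (iota : {linear M -> E}) :
  injective_module E -> injective iota -> (forall e, exists m, iota m = e) ->
  injective_module M.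
Proof.
move=> Einj iota_inj iota_surj N A f Asub f_hom.
have [G GE] : exists G : {linear N -> E}, forall x, x \in A -> G x = iota (f x).
  by apply: Einj => // a x y Ax Ay; rewrite f_hom // linearP.
have [g gE] := factor_through_mono iota_inj (fun x => iota_surj (G x)).
by exists g => x Ax; apply: iota_inj; rewrite gE GE.
Qed.

Theorem proposition2p13 (R : nzRingType) (M : lmodType R^c) :
  fin_gen M ->
  (injective_module M <-> weakly_injective M /\ qppi M).
Proof.
move=> Mfg; split=> [Minj | [[E [iota [[Einj iota_inj iota_ess] Mweak]] Mq]]].
  by split; [exact: injective_weakly_injective | exact: injective_qppi].
apply: (injective_module_iso Einj iota_inj) => e.
have [N [Nsub Nfg Ne iotaN]] := fg_submodule_containing iota e Mfg.
have [X [_ NX [h [h_inj hX]]]] := Mweak N Nsub Nfg.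
have [m <-] := (hX e).1 (NX e Ne).
apply: (hull_image_maximal iota_ess h_inj iota_inj Mq) => m'.
by apply/hX/NX/iotaN.
Qed.
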